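(* Let $N$ be a non-negative integer and let $c_0,c_1,c_2,c_3,c_4$ be parameters satisfying $c_0+c_1+c_2+c_3+c_4=-2N-3$. For non-negative integers $i,j,k,\ell$ with $i+j\le N$ and $k+\ell\le N$, the Tratnik polynomials of Racah type satisfy \[ \sum_{\substack{x,y\in\mathbb{Z}_{\ge 0}\\ x+y\le N}} \Lambda(x;c_1,c_2;N)\,\Omega(y;c_4,c_0,c_3;N-x)\,T_{i,j}(x,y)\,T_{k,\ell}(x,y)=\delta_{i,k}\,\delta_{j,\ell}\,\Lambda(j;c_4,c_0;N)\,\Omega(i;c_1,c_2,c_3;N-j). \]
   Context: Notation: $(a)_n=a(a+1)\cdots(a+n-1)$, $(a)_0=1$; $c_{ij}=c_i+c_j$, $c_{ijk}=c_i+c_j+c_k$. Parameters are assumed generic, so that no denominator below vanishes. For a non-negative integer $N$ and integers $0\le n,x\le N$ define \[ \Omega(n;c_1,c_2,c_3;N)=\binom{N}{n}(2n+c_{23}+1)\frac{(c_2+1)_n(N+2+c_{123})_n(c_1+1)_{N-n}}{(c_3+1)_n(c_{23}+n+1)_{N+1}}, \] \[ p_n(x;c_1,c_2,c_3;N)=\Omega(n;c_1,c_2,c_3;N)\,{}_4F_3\!\left(\begin{matrix}-n,\ n+c_{23}+1,\ -x,\ x+c_{12}+1\\ c_2+1,\ N+2+c_{123},\ -N\end{matrix};1\right), \] (the ${}_4F_3$ series being the terminating sum over $0\le s\le\min(n,x)$), and \[ \Lambda(x;c_1,c_2;N)=(-1)^x\binom{N}{x}(2x+c_{12}+1)\frac{(c_2+1)_x}{(c_1+1)_x(x+c_{12}+1)_{N+1}}.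 \] With $c_0+c_1+c_2+c_3+c_4=-2N-3$, the Tratnik polynomials of Racah type are, for non-negative integers $i,j,x,y$ with $i+j\le N$, $x+y\le N$, \[ T_{i,j}(x,y)=T_{i,j}(x,y;c_1,c_2,c_3,c_4;N)=p_i(x;c_1,c_2,c_3;N-j)\,p_j(y;c_3,c_0,c_4;N-x). \] *)

From HB Require Import structures.
From mathcomp Require Import all_boot all_order all_algebra.
Set Implicit Arguments. Unset Strict Implicit. Unset Printing Implicit Defensive.
Import Order.TTheory GRing.Theory Num.Theory.
Local Open Scope ring_scope.

Definition poch {R : numFieldType} (a : R) (n : nat) : R :=
  \prod_(k < n) (a + k%:R).

(* Omega(n; c1,c2,c3; N).  For n > N, 'C(N,n) = 0 (and N - n truncates). *)
Definition Omega {R : numFieldType} (n : nat) (c1 c2 c3 : R) (N : nat) : R :=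
  'C(N, n)%:R * (2 * n%:R + c2 + c3 + 1) *
  (poch (c2 + 1) n * poch (N%:R + 2 + c1 + c2 + c3) n * poch (c1 + 1) (N - n)) /
  (poch (c3 + 1) n * poch (c2 + c3 + n%:R + 1) N.+1).

(* Terminating 4F3( -n, n+c23+1, -x, x+c12+1 ; c2+1, N+2+c123, -N ; 1 ),
   summed over 0 <= s <= min(n, x). *)
Definition F43 {R : numFieldType} (n x : nat) (c1 c2 c3 : R) (N : nat) : R :=
  \sum_(s < (minn n x).+1)
    (poch (- n%:R) s * poch (n%:R + c2 + c3 + 1) s *
     poch (- x%:R) s * poch (x%:R + c1 + c2 + 1) s) /
    (poch (c2 + 1) s * poch (N%:R + 2 + c1 + c2 + c3) s *
     poch (- N%:R) s * (s`!)%:R).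

Definition racah_p {R : numFieldType} (n x : nat) (c1 c2 c3 : R) (N : nat) : R :=
  Omega n c1 c2 c3 N * F43 n x c1 c2 c3 N.

Definition Lambda {R : numFieldType} (x : nat) (c1 c2 : R) (N : nat) : R :=
  (-1) ^+ x * 'C(N, x)%:R * (2 * x%:R + c1 + c2 + 1) * poch (c2 + 1) x /
  (poch (c1 + 1) x * poch (x%:R + c1 + c2 + 1) N.+1).

(* Tratnik polynomial T_{i,j}(x,y; c1,c2,c3,c4; N); c0 is the parameter
   determined by c0 + ... + c4 = -2N-3, passed explicitly. *)
Definition tratnik {R : numFieldType} (i j x y : nat) (c0 c1 c2 c3 c4 : R)
  (N : nat) : R :=
  racah_p i x c1 c2 c3 (N - j) * racah_p j y c3 c0 c4 (N - x).

(* Genericity: every linear form that occurs (shifted) in a denominator of the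
   formulas above is nonzero for all shifts m = 1, ..., 2N+1. *)
Definition generic {R : numFieldType} (c0 c1 c2 c3 c4 : R) (N : nat) : Prop :=
  forall m : nat, (1 <= m <= 2 * N + 1)%N ->
    c0 + m%:R != 0 /\ c1 + m%:R != 0 /\ c2 + m%:R != 0 /\ c3 + m%:R != 0 /\
    c4 + m%:R != 0 /\
    c0 + c3 + m%:R != 0 /\ c2 + c3 + m%:R != 0 /\ c0 + c4 + m%:R != 0 /\
    c1 + c2 + m%:R != 0 /\
    c1 + c2 + c3 + m%:R != 0 /\ c0 + c3 + c4 + m%:R != 0.

From HB Require Import structures.
From mathcomp Require Import all_boot all_order all_algebra.
From mathcomp Require Import ring zify.
Import Order.TTheory GRing.Theory Num.Theory.
Local Open Scope ring_scope.
Set Implicit Arguments. Unset Strict Implicit. Unset Printing Implicit Defensive.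

(* For fixed x, the sum over y is the orthogonality relation of the
   one-variable Racah polynomials p_j(y; c3, c0, c4; N - x).  What is left is
   the weight Lambda(x; c1, c2; N) Omega(j; c3, c0, c4; N - x), which, because
   c0 + ... + c4 = -2N-3, equals Lambda(j; c4, c0; N) Omega(x; c3, c2, c1; N - j);
   so the sum over x is the orthogonality relation of p_i(x; c1, c2, c3; N - j).
   The one-variable relation off the diagonal comes from the second-order
   difference equation in x satisfied by the 4F3, whose eigenvalues
   n (n + c2 + c3 + 1) separate the degrees, and summation by parts.  The norm
   comes from the self-duality n <-> x of the 4F3, which reduces it to the
   evaluation sum_n Omega(n; c1, c2, c3; M) = (c1 + c2 + 2)_M / (c3 + 1)_M,
   proved by a WZ telescoping in M. *)

Lemma subst_neq0 (V : nmodType) (x y : V) : y = x -> y != 0 -> x != 0.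
Proof. by move=> ->. Qed.

Ltac shifted_neq0 gen m :=
  apply: (subst_neq0 _ (gen m _)); [rewrite ?natrD ?natrM; ring | lia].

Ltac neq0_side :=
  repeat (apply/andP; split); try assumption;
  try match goal with
  | |- is_true ((?n)`!%:R != 0) => by rewrite pnatr_eq0 -lt0n fact_gt0
  | H : is_true (?y != 0) |- is_true (?x != 0) =>
      rewrite (_ : x = y); [exact H | ring]
  end.

Section Pochhammer.
Variable R : numFieldType.
Implicit Types (a : R) (m n : nat).

Lemma poch0 a : poch a 0 = 1.
Proof. by rewrite /poch big_ord0. Qed.

Lemma pochS a n : poch a n.+1 = poch a n * (a + n%:R).
Proof. by rewrite /poch big_ord_recr. Qed.

Lemma pochSl a n : poch a n.+1 = a * poch (a + 1) n.
Proof.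
rewrite /poch big_ord_recl /= addr0; congr (_ * _).
by apply: eq_bigr => k _; rewrite /bump /= -addn1 natrD addrA.
Qed.

Lemma poch1 a : poch a 1 = a.
Proof. by rewrite pochS poch0 mul1r addr0. Qed.

Lemma poch_succ a n : a != 0 -> poch (a + 1) n = poch a n * (a + n%:R) / a.
Proof. by move=> a0; rewrite -pochS pochSl mulrAC mulfV // mul1r. Qed.

Lemma pochD a m n : poch a (m + n) = poch a m * poch (a + m%:R) n.
Proof.
elim: n => [|n IH]; first by rewrite addn0 poch0 mulr1.
by rewrite addnS !pochS IH natrD addrA mulrA.
Qed.

Lemma poch_neq0 a n : (forall k, (k < n)%N -> a + k%:R != 0) -> poch a n != 0.
Proof. by move=> nz; apply/prodf_neq0 => k _; apply: nz. Qed.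

Lemma poch_oppn_eq0 m n : (m < n)%N -> poch (- m%:R) n = 0 :> R.
Proof. by move=> lt_mn; rewrite /poch (bigD1 (Ordinal lt_mn)) //= addNr mul0r. Qed.

Lemma poch_oppD a n : poch (- (a + n%:R)) n = (-1) ^+ n * poch (a + 1) n.
Proof.
elim: n a => [|n IH] a; first by rewrite !poch0 mulr1.
rewrite pochS pochSl exprS -natr1.
have -> : - (a + (n%:R + 1)) = - (a + 1 + n%:R) by ring.
by rewrite IH; ring.
Qed.

End Pochhammer.

Lemma sum_by_parts (R : comPzRingType) (M : nat) (W B D f g : nat -> R) :
  (forall x, (x < M)%N -> W x * B x = W x.+1 * D x.+1) -> B M = 0 -> D 0%N = 0 ->
  \sum_(x < M.+1) W x * (B x * (f x.+1 - f x) - D x * (f x - f x.-1)) * g x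
  = - \sum_(x < M) W x * B x * (f x.+1 - f x) * (g x.+1 - g x).
Proof.
move=> WB BM0 D00.
have -> : \sum_(x < M.+1) W x * (B x * (f x.+1 - f x) - D x * (f x - f x.-1)) * g x
    = \sum_(x < M.+1) W x * B x * (f x.+1 - f x) * g x
      - \sum_(x < M.+1) W x * D x * (f x - f x.-1) * g x.
  by rewrite -sumrB; apply: eq_bigr => x _; ring.
rewrite big_ord_recr /= BM0 mulr0 !mul0r addr0.
rewrite big_ord_recl /= D00 mulr0 !mul0r add0r.
rewrite -sumrB -sumrN; apply: eq_bigr => x _.
by rewrite /bump /= add1n -(WB x (ltn_ord x)); ring.
Qed.

Lemma bin_factR (R : numFieldType) n m : (m <= n)%N ->
  'C(n, m)%:R = n`!%:R / (m`!%:R * (n - m)`!%:R) :> R.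
Proof.
move=> le_mn; rewrite -(bin_fact le_mn) !natrM mulfK //.
by rewrite mulf_neq0 // pnatr_eq0 -lt0n fact_gt0.
Qed.

Lemma sum_ord_addn_leq (V : nmodType) N x (F : nat -> V) : (x <= N)%N ->
  \sum_(y < N.+1 | (x + y <= N)%N) F y = \sum_(y < (N - x).+1) F y.
Proof.
move=> le_xN; have le_Nx : ((N - x).+1 <= N.+1)%N by rewrite ltnS leq_subr.
rewrite (big_ord_widen_cond _ xpredT F le_Nx).
by apply: eq_bigl => y; apply/idP/idP; lia.
Qed.

Lemma sum_ord_trunc (V : nmodType) N K (F : nat -> V) : (K <= N)%N ->
  (forall x, (K < x)%N -> (x <= N)%N -> F x = 0) ->
  \sum_(x < N.+1) F x = \sum_(x < K.+1) F x.
Proof.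
move=> le_KN F0; rewrite (big_ord_widen N.+1 F (le_KN : K.+1 <= N.+1)%N).
rewrite [RHS]big_mkcond /=.
by apply: eq_bigr => x _; case: ltnP => // lt_Kx; rewrite F0 // -ltnS.
Qed.

Lemma Omega_eq0 (R : numFieldType) n (a b c : R) M : (M < n)%N -> Omega n a b c M = 0.
Proof. by move=> lt_Mn; rewrite /Omega bin_small // !mul0r. Qed.

Section RacahBasis.
Variable R : numFieldType.
Variables (a b c : R) (M : nat).

Definition racah_basis (X : R) (s : nat) := poch (- X) s * poch (X + a + b + 1) s.

Definition racah_B (X : R) :=
  (X + b + 1) * (X + M%:R + a + b + c + 2) * (X - M%:R) * (X + a + b + 1)
  / ((2 * X + a + b + 1) * (2 * X + a + b + 2)).

Definition racah_D (X : R) :=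
  X * (X + a) * (X - c - M%:R - 1) * (X + a + b + M%:R + 1)
  / ((2 * X + a + b) * (2 * X + a + b + 1)).

Definition racah_eigen (s : nat) : R := s%:R * (s%:R + b + c + 1).

Definition racah_nu (s : nat) : R :=
  - (s%:R * (s%:R + b) * (s%:R + M%:R + a + b + c + 1) * (s%:R - 1 - M%:R)).

(* The four cases: at X = 0 the D-term vanishes and at X = M the B-term
   vanishes, so the denominators 2X+a+b and 2X+a+b+2 may then be zero. *)
Local Ltac corner_cases X h1 hD hB :=
  case: hD => [?|hD]; case: hB => [?|hB]; rewrite /racah_B /racah_D;
  [ match goal with H0 : X = 0, HM : X = M%:R |- _ =>
      rewrite H0 (_ : M%:R = 0 :> R) ?subrr ?(mulr0, mul0r);
      [ring | by rewrite -HM H0] end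
  | match goal with H0 : X = 0 |- _ =>
      rewrite H0 ?mulr0 ?add0r in h1 hB *; rewrite !(mulr0, mul0r);
      field; neq0_side end
  | match goal with HM : X = M%:R |- _ =>
      rewrite HM in h1 hD *; rewrite subrr !(mulr0, mul0r); field; neq0_side end
  | field; neq0_side ].

Lemma racah_basis_diff (X : R) (s : nat) :
  2 * X + a + b + 1 != 0 ->
  (X = 0 \/ 2 * X + a + b != 0) -> (X = M%:R \/ 2 * X + a + b + 2 != 0) ->
  racah_B X * (racah_basis (X + 1) s - racah_basis X s)
  - racah_D X * (racah_basis X s - racah_basis (X - 1) s)
  = racah_eigen s * racah_basis X s + racah_nu s * racah_basis X s.-1.
Proof.
move=> h1 hD hB; rewrite /racah_basis /racah_eigen /racah_nu.
case: s => [|[|t]] /=.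
- by rewrite !poch0; ring.
- by rewrite !poch1 !poch0; corner_cases X h1 hD hB.
set E1 := poch (- X + 1) t; set E2 := poch (X + a + b + 1 + 1) t.
have e1 : poch (- X) t.+2 = - X * (E1 * (- X + 1 + t%:R)) by rewrite pochSl pochS.
have e2 : poch (X + a + b + 1) t.+2 = (X + a + b + 1) * (E2 * (X + a + b + 2 + t%:R)).
  by rewrite pochSl pochS; congr (_ * (_ * _)); ring.
have e3 : poch (- X) t.+1 = - X * E1 by rewrite pochSl.
have e4 : poch (X + a + b + 1) t.+1 = (X + a + b + 1) * E2 by rewrite pochSl.
have e5 : poch (- (X + 1)) t.+2 = - (X + 1) * (- X * E1).
  by rewrite pochSl pochSl /E1; congr (_ * (_ * poch _ _)); ring.
have e6 : poch (X + 1 + a + b + 1) t.+2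
    = E2 * (X + a + b + 2 + t%:R) * (X + a + b + 3 + t%:R).
  rewrite !pochS /E2 -addn1 natrD (_ : X + 1 + a + b + 1 = X + a + b + 1 + 1); last by ring.
  ring.
have e7 : poch (- (X - 1)) t.+2 = E1 * (- X + 1 + t%:R) * (- X + 2 + t%:R).
  rewrite !pochS /E1 -addn1 natrD (_ : - (X - 1) = - X + 1); last by ring.
  ring.
have e8 : poch (X - 1 + a + b + 1) t.+2 = (X + a + b) * ((X + a + b + 1) * E2).
  by rewrite !pochSl /E2 (_ : X - 1 + a + b + 1 = X + a + b); last ring.
rewrite e1 e2 e3 e4 e5 e6 e7 e8 -[t.+2%:R]natr1 -[t.+1%:R]natr1.
corner_cases X h1 hD hB.
Qed.

End RacahBasis.

Definition racah_generic (R : numFieldType) (a b c : R) (M : nat) :=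
  forall m : nat, (1 <= m <= 2 * M + 1)%N ->
  a + m%:R != 0 /\ b + m%:R != 0 /\ c + m%:R != 0 /\
  a + b + m%:R != 0 /\ b + c + m%:R != 0 /\ a + b + c + m%:R != 0.

Lemma racah_generic_sym (R : numFieldType) (a b c : R) M :
  racah_generic a b c M -> racah_generic c b a M.
Proof.
move=> hg m /hg[ha [hb [hc [hab [hbc habc]]]]].
rewrite [c + b]addrC [b + a]addrC (_ : b + c + a = a + b + c); last by ring.
tauto.
Qed.

Section RacahOrthogonality.
Variable R : numFieldType.
Variables (a b c : R) (M : nat).
Hypothesis hg : racah_generic a b c M.

Let ga m : (1 <= m <= 2 * M + 1)%N -> a + m%:R != 0.
Proof. by move/hg; tauto. Qed.
Let gb m : (1 <= m <= 2 * M + 1)%N -> b + m%:R != 0.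
Proof. by move/hg; tauto. Qed.
Let gc m : (1 <= m <= 2 * M + 1)%N -> c + m%:R != 0.
Proof. by move/hg; tauto. Qed.
Let gab m : (1 <= m <= 2 * M + 1)%N -> a + b + m%:R != 0.
Proof. by move/hg; tauto. Qed.
Let gbc m : (1 <= m <= 2 * M + 1)%N -> b + c + m%:R != 0.
Proof. by move/hg; tauto. Qed.
Let gabc m : (1 <= m <= 2 * M + 1)%N -> a + b + c + m%:R != 0.
Proof. by move/hg; tauto. Qed.

Definition F43_coef (n s : nat) : R :=
  poch (- n%:R) s * poch (n%:R + b + c + 1) s /
  (poch (b + 1) s * poch (M%:R + 2 + a + b + c) s * poch (- M%:R) s * (s`!)%:R).

Lemma F43E n x : F43 n x a b c M = \sum_(s < n.+1) F43_coef n s * racah_basis a b x%:R s.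
Proof.
set u := fun s => F43_coef n s * racah_basis a b x%:R s.
transitivity (\sum_(s < (minn n x).+1) u s).
  by apply: eq_bigr => s _; rewrite /u /F43_coef /racah_basis; ring.
have le_min : (minn n x < n.+1)%N by rewrite ltnS geq_minl.
rewrite (big_ord_widen n.+1 u le_min) big_mkcond /=; apply: eq_bigr => s _.
case: ifPn => // hs; have lt_xs : (x < s)%N by move: hs (ltn_ord s); lia.
by rewrite /u /racah_basis poch_oppn_eq0 ?mul0r ?mulr0.
Qed.

Lemma F43_coef_rec n s : (s < n)%N -> (n <= M)%N ->
  F43_coef n s.+1 * racah_nu a b c M s.+1
  = (racah_eigen b c n - racah_eigen b c s) * F43_coef n s.
Proof.
move=> lt_sn le_nM.
have nz_oppM k : (k < M)%N -> - M%:R + k%:R != 0 :> R.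
  by move=> ltkM; rewrite addrC subr_eq0 eqr_nat; lia.
have p1 : poch (b + 1) s != 0.
  by apply: poch_neq0 => k ltks; shifted_neq0 gb k.+1.
have p2 : poch (M%:R + 2 + a + b + c) s != 0.
  by apply: poch_neq0 => k ltks; shifted_neq0 gabc (M + 2 + k)%N.
have p3 : poch (- M%:R : R) s != 0.
  by apply: poch_neq0 => k ltks; apply: nz_oppM; lia.
have q1 : b + 1 + s%:R != 0 by shifted_neq0 gb s.+1.
have q2 : M%:R + 2 + a + b + c + s%:R != 0 by shifted_neq0 gabc (M + 2 + s)%N.
have q3 : - M%:R + s%:R != 0 :> R by apply: nz_oppM; lia.
have q4 : s%:R + 1 != 0 :> R by rewrite natr1 pnatr_eq0.
rewrite /F43_coef /racah_nu /racah_eigen !pochS factS natrM -natr1.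
by field; neq0_side.
Qed.

Lemma racah_basis_diffn x s : (x <= M)%N ->
  racah_B a b c M x%:R * (racah_basis a b x.+1%:R s - racah_basis a b x%:R s)
  - racah_D a b c M x%:R * (racah_basis a b x%:R s - racah_basis a b x.-1%:R s)
  = racah_eigen b c s * racah_basis a b x%:R s
    + racah_nu a b c M s * racah_basis a b x%:R s.-1.
Proof.
move=> le_xM.
have -> : racah_D a b c M x%:R * (racah_basis a b x%:R s - racah_basis a b x.-1%:R s)
    = racah_D a b c M x%:R * (racah_basis a b x%:R s - racah_basis a b (x%:R - 1) s).
  by case: x le_xM => [|x] _; rewrite ?/racah_D ?mul0r // -natr1 addrK.
rewrite -natr1; apply: racah_basis_diff.
- by shifted_neq0 gab (2 * x + 1)%N.
- by case: x le_xM => [|x] ?; [left | right; shifted_neq0 gab (2 * x.+1)%N].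
- case: (ltnP x M) => [ltxM|leMx]; first by right; shifted_neq0 gab (2 * x + 2)%N.
  by left; congr _%:R; apply/eqP; rewrite eqn_leq le_xM.
Qed.

Lemma F43_diff n x : (n <= M)%N -> (x <= M)%N ->
  racah_B a b c M x%:R * (F43 n x.+1 a b c M - F43 n x a b c M)
  - racah_D a b c M x%:R * (F43 n x a b c M - F43 n x.-1 a b c M)
  = racah_eigen b c n * F43 n x a b c M.
Proof.
move=> le_nM le_xM.
have nu0 : racah_nu a b c M 0 = 0 by rewrite /racah_nu !mul0r oppr0.
have telescoped : \sum_(s < n.+1) F43_coef n s *
      (racah_eigen b c s * racah_basis a b x%:R s
       + racah_nu a b c M s * racah_basis a b x%:R s.-1)
    = racah_eigen b c n * \sum_(s < n.+1) F43_coef n s * racah_basis a b x%:R s.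
  under eq_bigr do rewrite mulrDr.
  rewrite big_split /= big_ord_recr /= [X in _ + X = _]big_ord_recl /= nu0.
  rewrite [in RHS]big_ord_recr /= mulrDr mul0r mulr0 add0r.
  under [X in _ + X = _]eq_bigr => i _ do
    rewrite /bump /= add1n add0n mulrA (F43_coef_rec (ltn_ord i) le_nM).
  rewrite addrAC -big_split /= mulr_sumr.
  congr (_ + _); last by ring.
  by apply: eq_bigr => i _; ring.
rewrite !F43E -telescoped -!sumrB !mulr_sumr -sumrB; apply: eq_bigr => s _.
by rewrite -racah_basis_diffn //; ring.
Qed.

Lemma Omega_balance x : (x < M)%N ->
  Omega x c b a M * racah_B a b c M x%:R
  = Omega x.+1 c b a M * racah_D a b c M x.+1%:R.
Proof.
move=> lt_xM; have [k eM] : exists k, M = (x + k.+1)%N by exists (M - x.+1)%N; lia.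
have hx1 : (x.+1%:R : R) != 0 by rewrite pnatr_eq0.
have binS : 'C(M, x.+1)%:R = 'C(M, x)%:R * (M - x)%:R / x.+1%:R :> R.
  by apply: (canRL (mulfK hx1)); rewrite -!natrM mulnC mul_bin_left mulnC.
rewrite /Omega binS; have [-> ->] : (M - x)%N = k.+1 /\ (M - x.+1)%N = k by lia.
rewrite (pochS (b + 1) x) (pochS (M%:R + 2 + c + b + a) x) (pochS (c + 1) k).
rewrite (pochS (a + 1) x) (pochSl (b + a + x%:R + 1)) -[x.+1%:R]natr1.
rewrite (_ : b + a + (x%:R + 1) + 1 = b + a + x%:R + 1 + 1); last by ring.
rewrite (pochS (b + a + x%:R + 1 + 1)) /racah_B /racah_D.
have pa : poch (a + 1) x != 0 by apply: poch_neq0 => i lt_ix; shifted_neq0 ga i.+1.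
have pb : poch (b + a + x%:R + 1 + 1) M != 0.
  by apply: poch_neq0 => i lt_iM; shifted_neq0 gab (x + i + 2)%N.
have h1 : 2 * (x%:R + 1) + a + b + 1 != 0 by shifted_neq0 gab (2 * x + 3)%N.
have h2 : 2 * (x%:R + 1) + a + b != 0 by shifted_neq0 gab (2 * x + 2)%N.
have h3 : b + a + x%:R + 1 + 1 + (x%:R + (1 + k%:R)) != 0.
  by shifted_neq0 gab (x + x + k + 3)%N.
have h4 : a + 1 + x%:R != 0 by shifted_neq0 ga x.+1.
have h5 : x%:R + 1 != 0 :> R by rewrite natr1 pnatr_eq0.
have h6 : 2 * x%:R + a + b + 1 != 0 by shifted_neq0 gab (2 * x + 1)%N.
have h7 : b + a + x%:R + 1 != 0 by shifted_neq0 gab x.+1.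
rewrite eM natrD in pb *.
by field; neq0_side.
Qed.

Lemma F43_orthogonal n m : (n <= M)%N -> (m <= M)%N -> n != m ->
  \sum_(x < M.+1) Omega x c b a M * F43 n x a b c M * F43 m x a b c M = 0.
Proof.
move=> le_nM le_mM neq_nm.
set W := fun x => Omega x c b a M.
set B := fun x : nat => racah_B a b c M x%:R.
set D := fun x : nat => racah_D a b c M x%:R.
set f := fun x => F43 n x a b c M.
set g := fun x => F43 m x a b c M.
have WB x : (x < M)%N -> W x * B x = W x.+1 * D x.+1 by apply: Omega_balance.
have BM0 : B M = 0 by rewrite /B /racah_B subrr !(mulr0, mul0r).
have D00 : D 0%N = 0 by rewrite /D /racah_D !mul0r.
have eigen_f : \sum_(x < M.+1) W x * (B x * (f x.+1 - f x) - D x * (f x - f x.-1)) * g x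
    = racah_eigen b c n * \sum_(x < M.+1) W x * f x * g x.
  rewrite mulr_sumr; apply: eq_bigr => x _.
  by rewrite /B /D /f (F43_diff le_nM (ltn_ord x : (x <= M)%N)); ring.
have eigen_g : \sum_(x < M.+1) W x * (B x * (g x.+1 - g x) - D x * (g x - g x.-1)) * f x
    = racah_eigen b c m * \sum_(x < M.+1) W x * f x * g x.
  rewrite mulr_sumr; apply: eq_bigr => x _.
  by rewrite /B /D /g (F43_diff le_mM (ltn_ord x : (x <= M)%N)); ring.
have : (racah_eigen b c n - racah_eigen b c m) * \sum_(x < M.+1) W x * f x * g x = 0.
  rewrite mulrBl -eigen_f -eigen_g !sum_by_parts // opprK addrC -sumrB.
  by rewrite big1 // => x _; ring.
have -> : racah_eigen b c n - racah_eigen b c m = (n%:R - m%:R) * (b + c + (n + m + 1)%:R).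
  by rewrite /racah_eigen !natrD; ring.
have nz_bc : b + c + (n + m + 1)%:R != 0 by apply: gbc; lia.
move/eqP; rewrite !mulf_eq0 subr_eq0 eqr_nat (negPf neq_nm) (negPf nz_bc) /=.
by move/eqP.
Qed.

Definition wz_F (K n : nat) : R :=
  Omega n a b c K * poch (c + 1) K / poch (a + b + 2) K.

Definition wz_G (K n : nat) : R :=
  - (n%:R * (n%:R + c) * (2 * K%:R + a + b + c + 3) * 'C(K.+1, n)%:R * poch (b + 1) n
     * poch (K%:R + 2 + a + b + c) n * poch (a + 1) (K.+1 - n) * poch (c + 1) K)
  / ((a + b + K%:R + 2) * (K%:R + 2 + a + b + c) * K.+1%:R * poch (c + 1) n
     * poch (b + c + n%:R + 1) K.+1 * poch (a + b + 2) K).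

Lemma wz_pair K n : (K < M)%N -> (n <= K)%N ->
  wz_F K.+1 n - wz_F K n = wz_G K n.+1 - wz_G K n.
Proof.
move=> lt_KM le_nK; have [k eK] : exists k, K = (n + k)%N by exists (K - n)%N; lia.
have [e1 e2 e3] : [/\ (K.+1 - n)%N = k.+1, (K - n)%N = k & (K.+1 - n.+1)%N = k].
  by split; lia.
have nzS i : i.+1%:R != 0 :> R by rewrite pnatr_eq0.
have bin1 : 'C(K.+1, n)%:R = 'C(K, n)%:R * K.+1%:R / k.+1%:R :> R.
  apply: (canRL (mulfK (nzS k))); rewrite -!natrM -e1 mulnC.
  by rewrite -mul_bin_down mulnC.
have bin2 : 'C(K.+1, n.+1)%:R = 'C(K, n)%:R * K.+1%:R / n.+1%:R :> R.
  apply: (canRL (mulfK (nzS n))); rewrite -!natrM mulnC.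
  by rewrite -mul_bin_diag mulnC.
rewrite /wz_F /wz_G /Omega bin1 bin2 e1 e2 e3.
rewrite (_ : K.+1%:R + 2 + a + b + c = K%:R + 2 + a + b + c + 1); last by rewrite -natr1; ring.
rewrite (_ : b + c + n.+1%:R + 1 = b + c + n%:R + 1 + 1); last by rewrite -natr1; ring.
rewrite (@poch_succ _ (K%:R + 2 + a + b + c)); last by shifted_neq0 gabc (K + 2)%N.
rewrite (@poch_succ _ (b + c + n%:R + 1)); last by shifted_neq0 gbc n.+1.
rewrite (pochS (a + 1) k) (pochS (b + c + n%:R + 1) K.+1) (pochS (c + 1) K)
  (pochS (a + b + 2) K) (pochS (b + 1) n) (pochS (K%:R + 2 + a + b + c) n) (pochS (c + 1) n).
have p1 : poch (a + b + 2) K != 0.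
  by apply: poch_neq0 => i lt_iK; shifted_neq0 gab (i + 2)%N.
have p2 : poch (b + c + n%:R + 1) K.+1 != 0.
  by apply: poch_neq0 => i lt_iK; shifted_neq0 gbc (n + i + 1)%N.
have p3 : poch (c + 1) n != 0.
  by apply: poch_neq0 => i lt_in; shifted_neq0 gc (i + 1)%N.
have h1 : K%:R + 1 != 0 :> R by rewrite natr1 pnatr_eq0.
have h2 : K%:R + 2 + a + b + c != 0 by shifted_neq0 gabc (K + 2)%N.
have h3 : a + b + K%:R + 2 != 0 by shifted_neq0 gab (K + 2)%N.
have h4 : k%:R + 1 != 0 :> R by rewrite natr1 pnatr_eq0.
have h5 : b + c + n%:R + 1 != 0 by shifted_neq0 gbc (n + 1)%N.
have h6 : b + c + n%:R + 1 + (K%:R + 1) != 0 by shifted_neq0 gbc (n + K + 2)%N.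
have h7 : c + 1 + n%:R != 0 by shifted_neq0 gc (n + 1)%N.
have h8 : n%:R + 1 != 0 :> R by rewrite natr1 pnatr_eq0.
rewrite -[K.+1%:R]natr1 -[k.+1%:R]natr1 -[n.+1%:R]natr1.
rewrite eK !natrD in p1 p2 h1 h2 h3 h6 *.
by field; neq0_side.
Qed.

Lemma wz_F_eq0 K n : (K < n)%N -> wz_F K n = 0.
Proof. by move=> lt_Kn; rewrite /wz_F Omega_eq0 // !mul0r. Qed.

Lemma wz_G_eq0 K n : (K.+1 < n)%N -> wz_G K n = 0.
Proof. by move=> lt_Kn; rewrite /wz_G bin_small // !(mulr0, mul0r) oppr0 mul0r. Qed.

Lemma wz_pair_last K : (K < M)%N ->
  wz_F K.+1 K.+1 - wz_F K K.+1 = wz_G K K.+2 - wz_G K K.+1.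
Proof.
move=> lt_KM; rewrite (@wz_F_eq0 K K.+1) // (@wz_G_eq0 K K.+2) // subr0 sub0r.
rewrite /wz_F /wz_G /Omega subnn binn (pochS (b + c + K.+1%:R + 1) K.+1).
rewrite (pochS (c + 1) K) (pochS (a + b + 2) K) !poch0.
rewrite (_ : K.+1%:R + 2 + a + b + c = K%:R + 2 + a + b + c + 1); last by rewrite -natr1; ring.
rewrite (@poch_succ _ (K%:R + 2 + a + b + c)); last by shifted_neq0 gabc (K + 2)%N.
have p1 : poch (a + b + 2) K != 0.
  by apply: poch_neq0 => i lt_iK; shifted_neq0 gab (i + 2)%N.
have p2 : poch (b + c + K.+1%:R + 1) K.+1 != 0.
  by apply: poch_neq0 => i lt_iK; shifted_neq0 gbc (K + i + 2)%N.
have p3 : poch (c + 1) K != 0.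
  by apply: poch_neq0 => i lt_iK; shifted_neq0 gc (i + 1)%N.
have h1 : K%:R + 1 != 0 :> R by rewrite natr1 pnatr_eq0.
have h2 : K%:R + 2 + a + b + c != 0 by shifted_neq0 gabc (K + 2)%N.
have h3 : a + b + K%:R + 2 != 0 by shifted_neq0 gab (K + 2)%N.
have h5 : c + 1 + K%:R != 0 by shifted_neq0 gc (K + 1)%N.
have h6 : b + c + K%:R + 1 + 1 + (K%:R + 1) != 0 by shifted_neq0 gbc (K + K + 3)%N.
have h7 : 2 * (K%:R + 1) + b + c + 1 != 0 by shifted_neq0 gbc (K + K + 3)%N.
rewrite -[K.+1%:R]natr1 in p2 *.
by field; neq0_side.
Qed.

Lemma sum_wz_F K : (K <= M)%N -> \sum_(n < K.+1) wz_F K n = 1.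
Proof.
elim: K => [|K IH] le_KM.
  rewrite big_ord1 (_ : nat_of_ord (ord0 : 'I_1) = 0%N) // /wz_F /Omega bin0 !poch0 poch1.
  rewrite !(mulr0, addr0, add0r, mul1r, mulr1, divr1).
  by rewrite divff //; shifted_neq0 gbc 1%N.
have -> : \sum_(n < K.+2) wz_F K.+1 n = \sum_(n < K.+2) (wz_F K n + (wz_G K n.+1 - wz_G K n)).
  apply: eq_bigr => n _; apply/eqP; rewrite addrC -subr_eq; apply/eqP.
  have := ltn_ord n; rewrite ltnS leq_eqVlt => /orP[/eqP ->|lt_nK].
    exact: wz_pair_last.
  exact: wz_pair le_KM lt_nK.
rewrite big_split /= big_ord_recr /= IH ?(ltnW le_KM) // (@wz_F_eq0 K K.+1) // addr0.
rewrite -(big_mkord xpredT (fun n => wz_G K n.+1 - wz_G K n)) telescope_sumr //.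
by rewrite (@wz_G_eq0 K K.+2) // /wz_G !mul0r oppr0 mul0r subrr addr0.
Qed.

Lemma sum_Omega_dual0 : \sum_(n < M.+1) Omega n a b c M * Omega 0 c b a M = 1.
Proof.
have -> : Omega 0 c b a M = poch (c + 1) M / poch (a + b + 2) M.
  rewrite /Omega bin0 subn0 !poch0 (pochSl (b + a + 0%:R + 1)).
  rewrite (_ : b + a + 0%:R + 1 + 1 = a + b + 2); last by ring.
  have p1 : poch (a + b + 2) M != 0.
    by apply: poch_neq0 => i lt_iM; shifted_neq0 gab (i + 2)%N.
  have h1 : b + a + 0%:R + 1 != 0 by shifted_neq0 gab 1%N.
  by field; neq0_side.
by rewrite -mulr_suml -[RHS](sum_wz_F (leqnn M)) /wz_F -!mulr_suml mulrA.
Qed.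

End RacahOrthogonality.

Lemma F43_dual (R : numFieldType) (a b c : R) M n x :
  F43 n x a b c M = F43 x n c b a M.
Proof.
rewrite /F43 minnC; apply: eq_bigr => s _.
have [-> -> ->] : [/\ x%:R + b + a = x%:R + a + b, n%:R + c + b = n%:R + b + c
  & M%:R + 2 + c + b + a = M%:R + 2 + a + b + c] by split; ring.
ring.
Qed.

Lemma F43_x0 (R : numFieldType) (a b c : R) M n : F43 n 0 a b c M = 1.
Proof.
rewrite /F43 minn0 big_ord1 (_ : nat_of_ord (ord0 : 'I_1) = 0%N) //.
by rewrite !poch0 !mulr1 divr1.
Qed.

Lemma F43_0x (R : numFieldType) (a b c : R) M x : F43 0 x a b c M = 1.
Proof. by rewrite F43_dual F43_x0. Qed.

Section RacahNorm.
Variable R : numFieldType.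
Variables (a b c : R) (M : nat).
Hypothesis hg : racah_generic a b c M.

(* Summing the double sum [Z] first over [x] leaves the norm; summing it first
   over [k] uses the orthogonality of the dual family F43 x . c b a M against
   F43 0 . c b a M = 1, and leaves only sum_Omega_dual0. *)
Lemma F43_orthogonality n m : (n <= M)%N -> (m <= M)%N ->
  (\sum_(x < M.+1) Omega x c b a M * F43 n x a b c M * F43 m x a b c M)
    * Omega n a b c M = (n == m)%:R.
Proof.
move=> le_nM le_mM; have [<-|neq_nm] := eqVneq n m; last first.
  by rewrite F43_orthogonal // mul0r.
pose Z := \sum_(k < M.+1) \sum_(x < M.+1)
  F43 n x a b c M * Omega x c b a M * F43 k x a b c M * Omega k a b c M.
have Z_norm : Z = (\sum_(x < M.+1) Omega x c b a M * F43 n x a b c M * F43 n x a b c M)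
                  * Omega n a b c M.
  rewrite /Z (bigD1 (Ordinal (le_nM : (n < M.+1)%N))) //= [X in _ + X]big1 => [|k neq_kn].
    by rewrite addr0 mulr_suml; apply: eq_bigr => x _; ring.
  rewrite -mulr_suml -[RHS](mul0r (Omega k a b c M)); congr (_ * _).
  rewrite -[RHS](F43_orthogonal hg le_nM (ltn_ord k)); last first.
    by apply: contra neq_kn => /eqP eq_nk; apply/eqP/val_inj.
  by apply: eq_bigr => x _; ring.
have Z_one : Z = 1.
  rewrite /Z exchange_big big_ord_recl /= [X in _ + X]big1 => [|x _].
    rewrite addr0 -[RHS](sum_Omega_dual0 hg); apply: eq_bigr => k _.
    by rewrite !F43_x0; ring.
  rewrite (_ : bump 0 x = x.+1) //.
  transitivity (F43 n x.+1 a b c M * Omega x.+1 c b a M *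
    \sum_(k < M.+1) Omega k a b c M * F43 x.+1 k c b a M * F43 0 k c b a M).
    rewrite mulr_sumr; apply: eq_bigr => k _.
    by rewrite F43_0x (F43_dual _ _ _ _ k); ring.
  by rewrite (F43_orthogonal (racah_generic_sym hg) (ltn_ord x) (leq0n M)) ?mulr0.
by rewrite -Z_norm Z_one.
Qed.

End RacahNorm.

Lemma racah_p_orthogonality (R : numFieldType) (a b c : R) M n m :
  racah_generic a b c M ->
  \sum_(x < M.+1) Omega x c b a M * racah_p n x a b c M * racah_p m x a b c M
  = (n == m)%:R * Omega n a b c M.
Proof.
move=> hg; have [lt_Mn|le_nM] := ltnP M n.
  rewrite (Omega_eq0 _ _ _ lt_Mn) mulr0 big1 // => x _.
  by rewrite /racah_p (Omega_eq0 _ _ _ lt_Mn) !(mul0r, mulr0).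
have [lt_Mm|le_mM] := ltnP M m.
  rewrite big1 => [|x _]; last by rewrite /racah_p (Omega_eq0 _ _ _ lt_Mm) !(mul0r, mulr0).
  by have [->|_] := eqVneq n m; rewrite ?(Omega_eq0 _ _ _ lt_Mm) ?mulr0 ?mul0r.
transitivity (Omega m a b c M * ((\sum_(x < M.+1)
    Omega x c b a M * F43 n x a b c M * F43 m x a b c M) * Omega n a b c M)).
  by rewrite mulr_suml mulr_sumr; apply: eq_bigr => x _; rewrite /racah_p; ring.
rewrite F43_orthogonality // mulrC.
by have [->|_] := eqVneq n m; rewrite ?mul0r.
Qed.

Section TratnikOrthogonality.
Variable R : numFieldType.
Variables (N : nat) (c0 c1 c2 c3 c4 : R).
Hypothesis hsum : c0 + c1 + c2 + c3 + c4 = - (2 * N + 3)%:R.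
Hypothesis hgen : generic c0 c1 c2 c3 c4 N.

Let g1 m : (1 <= m <= 2 * N + 1)%N -> c1 + m%:R != 0.
Proof. by move/hgen; tauto. Qed.
Let g4 m : (1 <= m <= 2 * N + 1)%N -> c4 + m%:R != 0.
Proof. by move/hgen; tauto. Qed.
Let g12 m : (1 <= m <= 2 * N + 1)%N -> c1 + c2 + m%:R != 0.
Proof. by move/hgen; tauto. Qed.
Let g04 m : (1 <= m <= 2 * N + 1)%N -> c0 + c4 + m%:R != 0.
Proof. by move/hgen; tauto. Qed.

Let generic123 K : (K <= N)%N -> racah_generic c1 c2 c3 K.
Proof.
move=> le_KN m hm; have /hgen : (1 <= m <= 2 * N + 1)%N by lia.
tauto.
Qed.

Let generic304 K : (K <= N)%N -> racah_generic c3 c0 c4 K.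
Proof.
move=> le_KN m hm; have /hgen : (1 <= m <= 2 * N + 1)%N by lia.
rewrite [c3 + c0]addrC; tauto.
Qed.

(* The constraint c0 + ... + c4 = -2N-3 gives
   (N - x + 2 + c3 + c0 + c4)_j = (-1)^j (x + N - j + c1 + c2 + 2)_j,
   and symmetrically under (x, c1, c2) <-> (j, c4, c0); after that both sides
   are the same product. *)
Lemma Lambda_Omega_swap x j : (x + j <= N)%N ->
  Lambda x c1 c2 N * Omega j c3 c0 c4 (N - x)
  = Lambda j c4 c0 N * Omega x c3 c2 c1 (N - j).
Proof.
move=> le_xjN; have [r eN] : exists r, N = (x + j + r)%N by exists (N - x - j)%N; lia.
have c0E : c0 = - (2 * N + 3)%:R - c1 - c2 - c3 - c4 by rewrite -hsum; ring.
have [le_xN le_jN le_jNx le_xNj] :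
  [/\ (x <= N)%N, (j <= N)%N, (j <= N - x)%N & (x <= N - j)%N] by split; lia.
rewrite /Lambda /Omega !(@bin_factR R _ _ le_xN, @bin_factR R _ _ le_jN,
  @bin_factR R _ _ le_jNx, @bin_factR R _ _ le_xNj).
have [-> ->] : (N - x = j + r)%N /\ (N - j = x + r)%N by lia.
rewrite !addKn.
set Q1 := poch (x%:R + c1 + c2 + 1) (x + r).+1.
set Q2 := poch (c1 + c2 + (2 * x + r + 1)%:R + 1) j.
set Q3 := poch (j%:R + c4 + c0 + 1) (j + r).+1.
set Q4 := poch (c0 + c4 + (2 * j + r + 1)%:R + 1) x.
have -> : poch ((j + r)%:R + 2 + c3 + c0 + c4) j = (-1) ^+ j * Q2.
  by rewrite /Q2 -poch_oppD; congr poch; rewrite c0E eN; ring.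
have -> : poch ((x + r)%:R + 2 + c3 + c2 + c1) x = (-1) ^+ x * Q4.
  by rewrite /Q4 -poch_oppD; congr poch; rewrite c0E eN; ring.
have -> : poch (x%:R + c1 + c2 + 1) N.+1 = Q1 * Q2.
  rewrite eN (_ : (x + j + r).+1 = (x + r).+1 + j)%N; last by lia.
  by rewrite pochD; congr (_ * poch _ _); ring.
have -> : poch (j%:R + c4 + c0 + 1) N.+1 = Q3 * Q4.
  rewrite eN (_ : (x + j + r).+1 = (j + r).+1 + x)%N; last by lia.
  by rewrite pochD; congr (_ * poch _ _); ring.
have -> : poch (c2 + c1 + x%:R + 1) (x + r).+1 = Q1 by rewrite /Q1; congr poch; ring.
have -> : poch (c0 + c4 + j%:R + 1) (j + r).+1 = Q3 by rewrite /Q3; congr poch; ring.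
have q1 : Q1 != 0 by apply: poch_neq0 => i lt_i; shifted_neq0 g12 (x + 1 + i)%N.
have q2 : Q2 != 0 by apply: poch_neq0 => i lt_i; shifted_neq0 g12 (2 * x + r + 2 + i)%N.
have q3 : Q3 != 0 by apply: poch_neq0 => i lt_i; shifted_neq0 g04 (j + 1 + i)%N.
have q4 : Q4 != 0 by apply: poch_neq0 => i lt_i; shifted_neq0 g04 (2 * j + r + 2 + i)%N.
have p1 : poch (c1 + 1) x != 0 by apply: poch_neq0 => i lt_i; shifted_neq0 g1 (i + 1)%N.
have p4 : poch (c4 + 1) j != 0 by apply: poch_neq0 => i lt_i; shifted_neq0 g4 (i + 1)%N.
by field; neq0_side.
Qed.

Lemma sum_tratnik_y i j k l x : (x <= N)%N ->
  \sum_(y < N.+1 | (x + y <= N)%N)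
     Lambda x c1 c2 N * Omega y c4 c0 c3 (N - x) *
     tratnik i j x y c0 c1 c2 c3 c4 N * tratnik k l x y c0 c1 c2 c3 c4 N
  = (j == l)%:R * (Lambda x c1 c2 N * Omega j c3 c0 c4 (N - x)
                   * racah_p i x c1 c2 c3 (N - j) * racah_p k x c1 c2 c3 (N - l)).
Proof.
move=> le_xN.
pose t y := Lambda x c1 c2 N * Omega y c4 c0 c3 (N - x) *
  tratnik i j x y c0 c1 c2 c3 c4 N * tratnik k l x y c0 c1 c2 c3 c4 N.
rewrite (sum_ord_addn_leq t le_xN).
transitivity (Lambda x c1 c2 N * racah_p i x c1 c2 c3 (N - j) * racah_p k x c1 c2 c3 (N - l)
  * \sum_(y < (N - x).+1) Omega y c4 c0 c3 (N - x)
      * racah_p j y c3 c0 c4 (N - x) * racah_p l y c3 c0 c4 (N - x)).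
  by rewrite mulr_sumr; apply: eq_bigr => y _; rewrite /t /tratnik; ring.
by rewrite racah_p_orthogonality; [ring | exact: generic304 (leq_subr x N)].
Qed.

Lemma sum_racah_x i k j : (i + j <= N)%N ->
  \sum_(x < N.+1) Lambda x c1 c2 N * Omega j c3 c0 c4 (N - x)
     * racah_p i x c1 c2 c3 (N - j) * racah_p k x c1 c2 c3 (N - j)
  = (i == k)%:R * Lambda j c4 c0 N * Omega i c1 c2 c3 (N - j).
Proof.
move=> le_ijN.
pose t x := Lambda x c1 c2 N * Omega j c3 c0 c4 (N - x)
  * racah_p i x c1 c2 c3 (N - j) * racah_p k x c1 c2 c3 (N - j).
have t0 x : (N - j < x)%N -> (x <= N)%N -> t x = 0.
  move=> lt_x le_xN; rewrite /t (@Omega_eq0 _ j c3 c0 c4 (N - x)) ?(mulr0, mul0r) //.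
  lia.
rewrite (@sum_ord_trunc _ N (N - j) t (leq_subr j N) t0).
transitivity (Lambda j c4 c0 N * \sum_(x < (N - j).+1) Omega x c3 c2 c1 (N - j)
  * racah_p i x c1 c2 c3 (N - j) * racah_p k x c1 c2 c3 (N - j)).
  rewrite mulr_sumr; apply: eq_bigr => x _.
  have le_xjN : (x + j <= N)%N by have := ltn_ord x; lia.
  by rewrite /t (Lambda_Omega_swap le_xjN); ring.
by rewrite racah_p_orthogonality; [ring | exact: generic123 (leq_subr j N)].
Qed.

End TratnikOrthogonality.

Theorem mainTheorem1 (R : numFieldType) (N : nat) (c0 c1 c2 c3 c4 : R)
  (hsum : c0 + c1 + c2 + c3 + c4 = - (2 * N + 3)%:R)
  (hgen : generic c0 c1 c2 c3 c4 N)
  (i j k l : nat) (hij : (i + j <= N)%N) (hkl : (k + l <= N)%N) :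
  \sum_(x < N.+1) \sum_(y < N.+1 | (x + y <= N)%N)
     Lambda x c1 c2 N * Omega y c4 c0 c3 (N - x) *
     tratnik i j x y c0 c1 c2 c3 c4 N * tratnik k l x y c0 c1 c2 c3 c4 N
  = (i == k)%:R * (j == l)%:R * Lambda j c4 c0 N * Omega i c1 c2 c3 (N - j).
Proof.
under eq_bigr => x _ do rewrite (sum_tratnik_y hgen i j k l (ltn_ord x)).
have [<-|neq_jl] := eqVneq j l; last first.
  by rewrite mulr0 !mul0r big1 // => x _; rewrite mul0r.
under eq_bigr do rewrite mul1r.
by rewrite mulr1 sum_racah_x.
Qed.
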